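(* Let $G=(V,E)$ be a graph with $V=[n]$ and no self-loops, and let $q_G(x)=\sum_{\{i,j\}\in E}a_{ij}x_ix_j+\sum_{i\in V}c_ix_i+c_0$ be positive on $[0,1]^n$. Let \[ \mathcal{G}_G=\Bigl\{\frac{(1,x,z)}{q_G(x)}\Bigm| x\in[0,1]^n,\ z_{ij}=x_ix_j\ \text{for }\{i,j\}\in E\Bigr\}. \] Then \[ \operatorname{conv}(\mathcal{G}_G)=\Bigl\{(\rho,y,w)\Bigm| (y,w)\in\rho\,\mathrm{QP}_G,\ \rho\ge0,\ \sum_{\{i,j\}\in E}a_{ij}w_{ij}+\sum_{i\in V}c_iy_i+c_0\rho=1\Bigr\}, \] and $\mathrm{QP}_G=\{(x,z)\mid (1,x,z)\in\sigma\operatorname{conv}(\mathcal{G}_G),\ \sigma\ge0\}$.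
   Context: The boolean quadric polytope $\mathrm{QP}_G$ is the convex hull of $\{(x,z)\in\mathbb{R}^{|V|+|E|}\mid x\in\{0,1\}^{|V|},\ z_{ij}=x_ix_j\ \text{for }\{i,j\}\in E\}$. For a set $K$, $\lambda K=\{\lambda k\mid k\in K\}$ for $\lambda>0$ and $0K$ is the recession cone of $K$. *)

From HB Require Import structures.
From mathcomp Require Import all_boot all_order all_algebra.
From mathcomp Require Import classical_sets reals.
Set Implicit Arguments. Unset Strict Implicit. Unset Printing Implicit Defensive.
Import Order.TTheory GRing.Theory Num.Theory.
Local Open Scope ring_scope.
Local Open Scope classical_set_scope.

(* Edges of a graph on [n] = 'I_n : E is a set of 2-element subsets of 'I_n.
   The coordinate type of edges is the finite subtype of E. *)
Definition edge (n : nat) (E : {set {set 'I_n}}) := {e : {set 'I_n} | e \in E}.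

Definition conv (R : realType) (I : Type) (S : set (I -> R)) : set (I -> R) :=
  [set p | exists (k : nat) (lam : 'I_k -> R) (pts : 'I_k -> I -> R),
     (forall j, 0 <= lam j) /\ \sum_(j < k) lam j = 1 /\
     (forall j, S (pts j)) /\ p = (fun c => \sum_(j < k) lam j * pts j c)].

Definition rec_cone (R : realType) (I : Type) (K : set (I -> R)) : set (I -> R) :=
  [set d | forall k, K k -> forall t : R, 0 <= t -> K (fun c => k c + t * d c)].

(* lambda K = {lambda k | k in K} for lambda > 0, and 0 K = recession cone of K
   (only used for lambda >= 0). *)
Definition scaleset (R : realType) (I : Type) (lam : R) (K : set (I -> R))
  : set (I -> R) :=
  if 0 < lam then [set (fun c => lam * k c) | k in K] else rec_cone K.

Definition liftxz (R : realType) (n : nat) (E : {set {set 'I_n}})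
  (x : 'I_n -> R) : 'I_n + edge E -> R :=
  fun c => match c with
           | inl i => x i
           | inr e => \prod_(i in val e) x i
           end.

Definition QP (R : realType) (n : nat) (E : {set {set 'I_n}}) : set ('I_n + edge E -> R) :=
  conv [set p | exists x : 'I_n -> R, (forall i, x i = 0 \/ x i = 1) /\ p = @liftxz R n E x].

Definition qG (R : realType) (n : nat) (E : {set {set 'I_n}})
  (a : edge E -> R) (c : 'I_n -> R) (c0 : R) (x : 'I_n -> R) : R :=
  \sum_(e : edge E) a e * \prod_(i in val e) x i + \sum_(i < n) c i * x i + c0.

(* The point (1, u) in R^{1 + n + |E|}; coordinate None is the first one. *)
Definition cons1 (R : realType) (I : Type) (u : I -> R) : option I -> R :=
  fun c => match c with None => 1 | Some d => u d end.

Definition GG (R : realType) (n : nat) (E : {set {set 'I_n}})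
  (a : edge E -> R) (c : 'I_n -> R) (c0 : R) : set (option ('I_n + edge E) -> R) :=
  [set p | exists x : 'I_n -> R, (forall i, 0 <= x i <= 1) /\
     p = (fun d => cons1 (@liftxz R n E x) d / qG a c c0 x)].

From HB Require Import structures.
From mathcomp Require Import all_boot all_order all_algebra.
From mathcomp Require Import classical_sets reals boolp.
From mathcomp Require Import ring lra.
Import Order.TTheory GRing.Theory Num.Theory.
Local Open Scope ring_scope.
Local Open Scope classical_set_scope.
Set Implicit Arguments. Unset Strict Implicit. Unset Printing Implicit Defensive.

(* G_G is the perspective image x |-> (1, x) / l(x) of the lifted cube under the
   affine form l(x, z) = a.z + c.x + c0. For any set S on which l >= m > 0, a
   convex combination sum_j lam_j (1, s_j) / l(s_j) has first coordinate
   rho = sum_j lam_j / l(s_j) > 0, lies over rho conv S and satisfies the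
   homogenized equation; conversely a point rho sum_j mu_j s_j is recovered with
   the weights mu_j rho l(s_j). Since a point x of the cube is the mean of a
   product distribution on the vertices whose moments are the monomials of x,
   the lifted cube has convex hull QP_G. The degenerate case rho = 0 cannot
   occur because QP_G is bounded, and the bound l >= m caps the first coordinate
   of conv G_G by 1/m, which excludes sigma = 0 in the cone description. *)

Section ConvexHull.
Variables (R : realType) (I : Type).
Implicit Types (S T K : set (I -> R)).

Lemma conv_comb (B : finType) S (mu : B -> R) (pts : B -> I -> R) :
  (forall b, 0 <= mu b) -> \sum_b mu b = 1 -> (forall b, S (pts b)) ->
  conv S (fun c => \sum_b mu b * pts b c).
Proof.
move=> mu_ge0 mu1 Spts.
exists #|B|, (fun j => mu (enum_val j)), (fun j => pts (enum_val j)).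
have enumE (F : B -> R) : \sum_b F b = \sum_(j < #|B|) F (enum_val j).
  by rewrite -(big_enum_val (A := B)); apply: eq_bigl => b; rewrite inE.
split=> //; split; first by rewrite -enumE.
by split=> //; apply: funext => c; rewrite enumE.
Qed.

Lemma conv_sub S : S `<=` conv S.
Proof.
move=> s Ss; have := @conv_comb unit S (fun=> 1) (fun=> s).
rewrite big_const card_unit /= addr0 => /(_ (fun=> ler01) erefl (fun=> Ss)).
by congr (conv S _); apply: funext => c; rewrite big_const card_unit /= addr0 mul1r.
Qed.

Lemma conv_mono S T : S `<=` T -> conv S `<=` conv T.
Proof.
move=> ST _ [k [lam [pts [lam_ge0 [lam1 [Spts ->]]]]]].
by exists k, lam, pts; split=> //; split=> //; split=> // j; apply: ST.
Qed.

Lemma conv_conv S : conv (conv S) `<=` conv S.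
Proof.
move=> _ [k [lam [q [lam_ge0 [lam1 [convq ->]]]]]].
pose comb := {m : nat & (('I_m -> R) * ('I_m -> I -> R))%type}.
have /choice[t ht] : forall j, exists tj : comb,
    [/\ forall l, 0 <= (projT2 tj).1 l, \sum_l (projT2 tj).1 l = 1,
        forall l, S ((projT2 tj).2 l) &
        q j = (fun c => \sum_l (projT2 tj).1 l * (projT2 tj).2 l c)].
  move=> j; have [m [mu [pts [? [? [? ->]]]]]] := convq j.
  by exists (existT _ m (mu, pts)).
pose J (j : 'I_k) := ordinal (projT1 (t j)).
have sumE (F : forall j, J j -> R) :
    \sum_(j < k) \sum_(l : J j) F j l = \sum_(p : {j : 'I_k & J j}) F (tag p) (tagged p).
  exact: (sig_big_dep xpredT (fun _ => xpredT)).
have -> : (fun c => \sum_j lam j * q j c) = (fun c => \sum_(p : {j : 'I_k & J j})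
    (lam (tag p) * (projT2 (t (tag p))).1 (tagged p)) * (projT2 (t (tag p))).2 (tagged p) c).
  apply: funext => c; rewrite -(sumE (fun j l =>
    lam j * (projT2 (t j)).1 l * (projT2 (t j)).2 l c)).
  apply: eq_bigr => j _; case: (ht j) => _ _ _ ->; rewrite mulr_sumr.
  by apply: eq_bigr => l _; rewrite mulrA.
apply: conv_comb.
- by move=> p; apply: mulr_ge0 => //; case: (ht (tag p)).
- rewrite -(sumE (fun j l => lam j * (projT2 (t j)).1 l)) -lam1.
  by apply: eq_bigr => j _; case: (ht j) => _ mu1 _ _; rewrite -mulr_sumr mu1 mulr1.
- by move=> p; case: (ht (tag p)).
Qed.

Lemma conv_box S p :
  (forall s, S s -> forall i, 0 <= s i <= 1) -> conv S p -> forall i, 0 <= p i <= 1.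
Proof.
move=> Sbox [k [lam [pts [lam_ge0 [lam1 [Spts ->]]]]]] i.
have ptsi j : 0 <= pts j i /\ pts j i <= 1 by apply/andP; apply: Sbox.
apply/andP; split; first by apply: sumr_ge0 => j _; rewrite mulr_ge0 //; case: (ptsi j).
by rewrite -lam1; apply: ler_sum => j _; rewrite ler_piMr //; case: (ptsi j).
Qed.

Lemma rec_cone_box K k d :
  K k -> (forall v, K v -> forall i, 0 <= v i <= 1) -> rec_cone K d -> d = fun=> 0.
Proof.
move=> Kk Kbox recd; apply: funext => i; apply/eqP; apply: contraT => di_neq0.
have t_ge0 : 0 <= 2 / `|d i| by rewrite divr_ge0.
have /andP[lo hi] := Kbox _ (recd k Kk _ t_ge0) i.
have /andP[lo' hi'] := Kbox _ Kk i.
have : `|2 / `|d i| * d i| <= 1 by rewrite ler_norml; apply/andP; split; lra.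
by rewrite normrM ger0_norm // divfK ?normr_eq0 //; lra.
Qed.

Lemma scaleset_gt0 (lam : R) K y :
  0 < lam -> scaleset lam K y <-> K (fun c => lam^-1 * y c).
Proof.
move=> lam_gt0; have lam_neq0 : lam != 0 by rewrite gt_eqF.
rewrite /scaleset lam_gt0; split=> [[k Kk <-]|Ky].
  by congr K: Kk; apply: funext => c; rewrite mulKf.
by exists (fun c => lam^-1 * y c) => //; apply: funext => c; rewrite mulVKf.
Qed.

End ConvexHull.

Definition dot (R : realType) (I : finType) (w p : I -> R) : R := \sum_i w i * p i.

Section LinearForm.
Variables (R : realType) (I : finType) (w : I -> R).

Lemma dot_comb (J : finType) (al : J -> R) (v : J -> I -> R) :
  dot w (fun i => \sum_j al j * v j i) = \sum_j al j * dot w (v j).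
Proof.
rewrite /dot; under eq_bigr do rewrite mulr_sumr; rewrite exchange_big /=.
by apply: eq_bigr => j _; rewrite mulr_sumr; apply: eq_bigr => i _; rewrite mulrCA.
Qed.

Lemma dotZ (r : R) (v : I -> R) : dot w (fun i => r * v i) = r * dot w v.
Proof. by rewrite /dot mulr_sumr; apply: eq_bigr => i _; rewrite mulrCA. Qed.

Lemma conv_halfspace (w0 m : R) (S : set (I -> R)) p :
  (forall s, S s -> m <= dot w s + w0) -> conv S p -> m <= dot w p + w0.
Proof.
move=> Sm [k [lam [pts [lam_ge0 [lam1 [Spts ->]]]]]].
rewrite dot_comb -[m]mul1r -[w0]mul1r -lam1 !mulr_suml -big_split /=.
by apply: ler_sum => j _; rewrite -mulrDr ler_wpM2l // Sm.
Qed.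

End LinearForm.

Definition homog (R : realType) (I : finType) (w : I -> R) (w0 : R)
  (p : option I -> R) : R :=
  dot w (fun d => p (Some d)) + w0 * p None.

Definition perspective (R : realType) (I : finType) (w : I -> R) (w0 : R)
  (S : set (I -> R)) : set (option I -> R) :=
  [set p | exists x, S x /\ p = (fun d => cons1 x d / (dot w x + w0))].

Section Perspective.
Variables (R : realType) (I : finType) (w : I -> R) (w0 : R) (S : set (I -> R)).
Variables (m : R) (x0 : I -> R).
Hypotheses (m_gt0 : 0 < m) (S_x0 : S x0) (S_lb : forall x, S x -> m <= dot w x + w0).
Hypothesis rec_convS : forall d, rec_cone (conv S) d -> d = fun=> 0.

Lemma homog_comb (J : finType) (al : J -> R) (v : J -> option I -> R) :
  homog w w0 (fun d => \sum_j al j * v j d) = \sum_j al j * homog w w0 (v j).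
Proof.
rewrite /homog dot_comb mulr_sumr -big_split /=.
by apply: eq_bigr => j _; rewrite mulrDr mulrCA.
Qed.

Lemma homogZ (r : R) (v : option I -> R) :
  homog w w0 (fun d => r * v d) = r * homog w w0 v.
Proof. by rewrite /homog dotZ mulrDr mulrCA. Qed.

Lemma homog_cons1 (x : I -> R) : homog w w0 (cons1 x) = dot w x + w0.
Proof. by rewrite /homog mulr1. Qed.

Lemma homogE p : p None != 0 ->
  homog w w0 p = p None * (dot w (fun d => (p None)^-1 * p (Some d)) + w0).
Proof. by move=> pN_neq0; rewrite /homog dotZ mulrDr mulVKf // mulrC. Qed.

Lemma conv_perspective_sub p : conv (perspective w w0 S) p ->
  [/\ 0 < p None, conv S (fun d => (p None)^-1 * p (Some d)) & homog w w0 p = 1].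
Proof.
case=> k [lam [pts [lam_ge0 [lam1 [Ppts ->]]]]] /=.
have [x /all_and2[Sx ptsE]] := choice Ppts.
set l := fun j => dot w (x j) + w0.
have l_gt0 j : 0 < l j by apply: lt_le_trans m_gt0 (S_lb (Sx j)).
set rho := \sum_j lam j * pts j None.
have rhoE : rho = \sum_j lam j / l j by apply: eq_bigr => j _; rewrite ptsE /= div1r.
have rho_gt0 : 0 < rho.
  have term_ge0 j : 0 <= lam j / l j by rewrite divr_ge0 // ltW.
  rewrite rhoE lt_def sumr_ge0 // andbT; apply/eqP => rho0.
  have lam0 j : lam j = 0.
    have /eqP := psumr_eq0P (fun j _ => term_ge0 j) rho0 (i := j) isT.
    by rewrite mulf_eq0 invr_eq0 (gt_eqF (l_gt0 j)) orbF => /eqP.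
  by move: lam1; rewrite big1 // => /eqP; rewrite eq_sym oner_eq0.
split=> //.
  have -> : (fun d => rho^-1 * \sum_j lam j * pts j (Some d)) =
      (fun d => \sum_j (rho^-1 * (lam j / l j)) * x j d).
    apply: funext => d; rewrite mulr_sumr; apply: eq_bigr => j _.
    by rewrite ptsE /= /l; ring.
  apply: conv_comb => // [j|].
    by rewrite mulr_ge0 ?divr_ge0 ?invr_ge0 // ltW.
  by rewrite -mulr_sumr -rhoE mulVf ?gt_eqF.
rewrite homog_comb -lam1; apply: eq_bigr => j _.
rewrite ptsE.
have -> : (fun d => cons1 (x j) d / l j) = (fun d => (l j)^-1 * cons1 (x j) d).
  by apply: funext => d; rewrite mulrC.
by rewrite homogZ homog_cons1 mulVf ?mulr1 // gt_eqF.
Qed.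

Lemma conv_perspective_sup p :
  0 < p None -> conv S (fun d => (p None)^-1 * p (Some d)) -> homog w w0 p = 1 ->
  conv (perspective w w0 S) p.
Proof.
move=> rho_gt0 [k [mu [s [mu_ge0 [mu1 [Ss vE]]]]]].
rewrite (homogE (lt0r_neq0 rho_gt0)) vE dot_comb => h1.
set l := fun j => dot w (s j) + w0.
have l_gt0 j : 0 < l j by apply: lt_le_trans m_gt0 (S_lb (Ss j)).
have -> : p = (fun d => \sum_j (mu j * p None * l j) * (cons1 (s j) d / l j)).
  apply: funext => -[d|] /=.
    transitivity (p None * ((p None)^-1 * p (Some d))); first by rewrite mulVKf ?gt_eqF.
    rewrite (congr1 (fun f => f d) vE) mulr_sumr; apply: eq_bigr => j _.
    by field; rewrite gt_eqF.
  transitivity (p None * \sum_j mu j); first by rewrite mu1 mulr1.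
  by rewrite mulr_sumr; apply: eq_bigr => j _; field; rewrite gt_eqF.
apply: conv_comb => [j||j]; first by rewrite !mulr_ge0 // ltW.
  rewrite -h1 -[w0]mul1r -mu1 mulr_suml -big_split mulr_sumr /=.
  by apply: eq_bigr => j _; rewrite /l; ring.
by exists (s j).
Qed.

Lemma conv_perspective_None_le p : conv (perspective w w0 S) p -> p None * m <= 1.
Proof.
case/conv_perspective_sub => rho_gt0 Sv h1.
rewrite -h1 (homogE (lt0r_neq0 rho_gt0)).
by apply: ler_wpM2l; [exact: ltW | exact: conv_halfspace S_lb Sv].
Qed.

Theorem conv_perspectiveE :
  conv (perspective w w0 S) =
  [set p | 0 <= p None /\ scaleset (p None) (conv S) (fun d => p (Some d)) /\
           homog w w0 p = 1].
Proof.
apply/seteqP; split=> p /=.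
  by case/conv_perspective_sub => rho_gt0 Sv h1; rewrite scaleset_gt0 ?ltW.
case=> + [scS h1]; rewrite le_eqVlt => /predU1P[rho0|rho_gt0].
  move: scS; rewrite /scaleset -rho0 ltxx => /rec_convS pS0; exfalso.
  move: h1; rewrite /homog pS0 -rho0 mulr0 addr0 /dot big1 => [/eqP|i _].
    by rewrite eq_sym oner_eq0.
  by rewrite mulr0.
by apply: conv_perspective_sup => //; rewrite -scaleset_gt0.
Qed.

Theorem conv_perspective_cone :
  conv S = [set u | exists sigma, 0 <= sigma /\
                    scaleset sigma (conv (perspective w w0 S)) (cons1 u)].
Proof.
apply/seteqP; split=> u /=.
  move=> Su; have s_gt0 := lt_le_trans m_gt0 (conv_halfspace S_lb Su).
  exists (dot w u + w0); split; first exact: ltW.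
  rewrite scaleset_gt0 //; apply: conv_perspective_sup => /=.
  - by rewrite mulr1 invr_gt0.
  - by congr (conv S): Su; apply: funext => d; rewrite mulr1 invrK mulVKf ?gt_eqF.
  - by rewrite homogZ homog_cons1 mulVf ?gt_eqF.
case=> sigma [+ scu]; rewrite le_eqVlt => /predU1P[sigma0|sigma_gt0].
  move: scu; rewrite /scaleset -sigma0 ltxx => rec_u; exfalso.
  pose k := fun d => cons1 x0 d / (dot w x0 + w0).
  have Pk : conv (perspective w w0 S) k by apply: conv_sub; exists x0.
  have [k_gt0 _ _] := conv_perspective_sub Pk.
  have minv_ge0 : 0 <= m^-1 by rewrite invr_ge0 ltW.
  have := conv_perspective_None_le (rec_u _ Pk _ minv_ge0).
  rewrite /= mulr1 mulrDl mulVf ?gt_eqF // => le1.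
  by have := mulr_gt0 k_gt0 m_gt0; lra.
move: scu; rewrite scaleset_gt0 // => /conv_perspective_sub[_ Su _].
by congr (conv S): Su; apply: funext => d /=; rewrite mulr1 invrK mulVKf ?gt_eqF.
Qed.

End Perspective.

Section UnitCube.
Variables (R : realType) (I : finType).

Definition cube_vertex (b : {ffun I -> bool}) : I -> R := fun i => (b i)%:R.

(* The product distribution on the vertices with mean [x]. *)
Definition cube_weight (x : I -> R) (b : {ffun I -> bool}) : R :=
  \prod_i (if b i then x i else 1 - x i).

Lemma cube_weight_ge0 x b : (forall i, 0 <= x i <= 1) -> 0 <= cube_weight x b.
Proof.
move=> x01; apply: prodr_ge0 => i _; have /andP[x_ge0 x_le1] := x01 i.
by case: (b i); rewrite // subr_ge0.
Qed.

Lemma sum_cube_weight_prod x (A : {set I}) :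
  \sum_b cube_weight x b * \prod_(i in A) cube_vertex b i = \prod_(i in A) x i.
Proof.
have -> : \prod_(i in A) x i = \prod_i \sum_(bi : bool)
    ((if bi then x i else 1 - x i) * (if i \in A then (bi%:R : R) else 1)).
  rewrite big_mkcond /=; apply: eq_bigr => i _; rewrite big_bool /=.
  by case: (i \in A); rewrite ?mulr1 ?mulr0 ?addr0 // addrC subrK.
rewrite bigA_distr_bigA /=; apply: eq_bigr => b _.
rewrite /cube_weight /cube_vertex (big_mkcond (mem A)) -big_split /=.
by apply: eq_bigr => i _; case: (b i); case: (i \in A); rewrite /= ?mulr1 ?mulr0.
Qed.

Lemma sum_cube_weight x : \sum_b cube_weight x b = 1.
Proof.
have := sum_cube_weight_prod x finset.set0; rewrite big_set0 => <-.
by apply: eq_bigr => b _; rewrite big_set0 mulr1.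
Qed.

Lemma cube_vertex_binary b i : cube_vertex b i = 0 \/ cube_vertex b i = 1.
Proof. by rewrite /cube_vertex; case: (b i); [right | left]. Qed.

Lemma binary_cube_vertex (x : I -> R) :
  (forall i, x i = 0 \/ x i = 1) -> x = cube_vertex [ffun i => x i == 1].
Proof.
move=> x01; apply: funext => i; rewrite /cube_vertex ffunE.
by case: (x01 i) => ->; rewrite ?eqxx // eq_sym oner_eq0.
Qed.

End UnitCube.

Section BooleanQuadricPolytope.
Variables (R : realType) (n : nat) (E : {set {set 'I_n}}).
Local Notation lift := (@liftxz R n E).
Local Notation QP := (@QP R n E).

Definition lifted_cube : set ('I_n + edge E -> R) :=
  [set lift x | x in [set x | forall i, 0 <= x i <= 1]].

Lemma liftxz_cube_expansion x :
  lift x = (fun d => \sum_b cube_weight x b * lift (cube_vertex R b) d).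
Proof.
apply: funext => -[i|e] /=; last by rewrite sum_cube_weight_prod.
have := sum_cube_weight_prod x [set i]; rewrite big_set1 => <-.
by apply: eq_bigr => b _; rewrite big_set1.
Qed.

Lemma lifted_cube_sub_QP : lifted_cube `<=` QP.
Proof.
move=> _ [x x01 <-]; rewrite liftxz_cube_expansion.
apply: conv_comb => [b||b]; first exact: cube_weight_ge0.
  exact: sum_cube_weight.
by exists (cube_vertex R b); split=> // i; apply: cube_vertex_binary.
Qed.

Lemma QP_liftedE : QP = conv lifted_cube.
Proof.
apply/seteqP; split; last by move=> v /(conv_mono lifted_cube_sub_QP)/conv_conv.
apply: conv_mono => _ [x [x01 ->]]; exists x => // i.
by case: (x01 i) => ->; rewrite ?lexx ?ler01.
Qed.

Lemma QP_box v : QP v -> forall d, 0 <= v d <= 1.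
Proof.
apply: conv_box => _ [x [x01 ->]] d.
have x01' i : 0 <= x i <= 1 by case: (x01 i) => ->; rewrite ?lexx ?ler01.
case: d => [i|e] //=; apply/andP; split.
  by apply: prodr_ge0 => i _; case/andP: (x01' i).
by apply: prodr_ile1 => i _; apply: x01'.
Qed.

Lemma rec_cone_QP d : rec_cone QP d -> d = fun=> 0.
Proof.
apply: (@rec_cone_box _ _ _ (lift (fun=> 0))); last exact: QP_box.
by apply: conv_sub; exists (fun=> 0); split=> // i; left.
Qed.

Definition qG_weight (a : edge E -> R) (c : 'I_n -> R) : 'I_n + edge E -> R :=
  fun d => match d with inl i => c i | inr e => a e end.

Lemma dot_qG_weight a c v :
  dot (qG_weight a c) v = \sum_e a e * v (inr e) + \sum_i c i * v (inl i).
Proof. by rewrite /dot big_sumType addrC. Qed.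

Lemma qG_liftxz a c c0 x : qG a c c0 x = dot (qG_weight a c) (lift x) + c0.
Proof. by rewrite dot_qG_weight. Qed.

Lemma GG_perspective a c c0 : GG a c c0 = perspective (qG_weight a c) c0 lifted_cube.
Proof.
apply/seteqP; split=> _ [x [x01 ->]].
  by exists (lift x); split; [exists x | rewrite -qG_liftxz].
by case: x01 => y y01 <-; exists y; split=> //; rewrite qG_liftxz.
Qed.

Lemma qG_lifted_lb a c c0 :
  (forall x : 'I_n -> R, (forall i, 0 <= x i <= 1) -> 0 < qG a c c0 x) ->
  exists2 m, 0 < m & forall v, lifted_cube v -> m <= dot (qG_weight a c) v + c0.
Proof.
move=> q_gt0; pose q b := qG a c c0 (cube_vertex R b).
pose b0 := [arg min_(b < [ffun=> false]) q b]%O.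
have vertex01 b i : 0 <= cube_vertex R b i <= 1.
  by case: (cube_vertex_binary R b i) => ->; rewrite ?lexx ?ler01.
exists (q b0); first exact: q_gt0.
move=> v /lifted_cube_sub_QP; apply: conv_halfspace => _ [x [x01 ->]].
rewrite -qG_liftxz (binary_cube_vertex x01) /b0.
by case: arg_minP => // b _; apply.
Qed.

End BooleanQuadricPolytope.

Arguments lifted_cube {R n} E.

Theorem proposition2 (R : realType) (n : nat) (E : {set {set 'I_n}})
  (a : edge E -> R) (c : 'I_n -> R) (c0 : R) :
  (forall e, e \in E -> #|e| = 2%N) ->
  (forall x : 'I_n -> R, (forall i, 0 <= x i <= 1) -> 0 < qG a c c0 x) ->
  conv (GG a c c0) =
    [set p : option ('I_n + edge E) -> R | 0 <= p None /\
       scaleset (p None) (@QP R n E) (fun d => p (Some d)) /\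
       \sum_(e : edge E) a e * p (Some (inr e)) + \sum_(i < n) c i * p (Some (inl i))
         + c0 * p None = 1]
  /\ @QP R n E = [set u | exists sigma : R, 0 <= sigma /\
                         scaleset sigma (conv (GG a c c0)) (cons1 u)].
Proof.
move=> _ q_gt0. (* the edges may have any size *)
have [m m_gt0 lifted_lb] := qG_lifted_lb q_gt0.
have lifted0 : lifted_cube E (liftxz (fun=> 0 : R)).
  by exists (fun=> 0) => // i; rewrite lexx ler01.
have rec0 (d : 'I_n + edge E -> R) : rec_cone (conv (lifted_cube E)) d -> d = fun=> 0.
  by rewrite -QP_liftedE; apply: rec_cone_QP.
rewrite GG_perspective QP_liftedE; split; last first.
  exact: conv_perspective_cone m_gt0 lifted0 lifted_lb.
rewrite (conv_perspectiveE m_gt0 lifted_lb rec0).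
by apply/seteqP; split=> p /=; rewrite /homog dot_qG_weight.
Qed.
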